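(* Let $F:\mathbb{R}^n\rightrightarrows\mathbb{R}^n$ be continuous with $F(x)$ nonempty, compact and convex for all $x$, assume $\Sigma:\dot x\in F(x)$ is forward complete, and let $X_o,X_u\subset\mathbb{R}^n$ be such that $\Sigma$ is robustly safe with respect to $(X_o,X_u)$, with robust-safety margin $\bar\epsilon_o$. Then for each continuous $\bar\epsilon:\mathbb{R}^n\to\mathbb{R}_{>0}$ with $\bar\epsilon(x)<\bar\epsilon_o(x)$ for all $x$, the set $K_{\bar\epsilon}$ satisfies: (1) if $\mathrm{cl}(X_o)\cap\mathrm{cl}(X_u)=\emptyset$, then $\mathrm{cl}(X_u)\cap\mathrm{cl}(K_{\bar\epsilon})=\emptyset$; (2) if $\mathrm{cl}(X_o)\cap X_u=\emptyset$, then $X_u\cap\mathrm{cl}(K_{\bar\epsilon})=\emptyset$.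
   Context: $\mathbb{B}$ is the closed unit ball. Continuity of a set-valued map means upper and lower semicontinuity. Solutions of a differential inclusion are locally absolutely continuous functions on an interval containing $0$ satisfying the inclusion a.e.; maximal solutions are non-extendable; $\mathcal{S}_{\Sigma'}(x)$ is the set of maximal solutions of $\Sigma'$ with $\phi(0)=x$. Forward complete: every maximal solution is defined on an interval unbounded to the right. $\Sigma_\epsilon$: $\dot x\in F(x)+\epsilon(x)\mathbb{B}$. $\Sigma'$ is safe with respect to $(X_o,X_u)$ if every solution starting in $X_o$ never enters $X_u$. $\Sigma$ is robustly safe with respect to $(X_o,X_u)$ if there is a continuous $\epsilon:\mathbb{R}^n\to\mathbb{R}_{>0}$ (a robust-safety margin) such that $\Sigma_\epsilon$ is safe with respect to $(X_o,X_u)$. For $t\ge0$, $R_{\Sigma'}(t,x):=\{\phi(s):\phi\in\mathcal{S}_{\Sigma'}(x),\ s\in\mathrm{dom}\,\phi\cap[0,t]\}$, and $K_{\bar\epsilon}:=\bigcup_{t\ge0}\bigcup_{x\in X_o}R_{\Sigma_{\bar\epsilon}}(t,x)$. *)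

From HB Require Import structures.
From mathcomp Require Import all_boot all_order all_algebra.
From mathcomp Require Import all_classical all_reals all_analysis.
Set Implicit Arguments. Unset Strict Implicit. Unset Printing Implicit Defensive.
Import Order.TTheory GRing.Theory Num.Theory.
Import numFieldNormedType.Exports.
Local Open Scope classical_set_scope.
Local Open Scope ring_scope.

Section Defs.
Variables (R : realType) (n : nat).
Notation V := 'rV[R]_n.

Definition enorm (v : V) : R := Num.sqrt (\sum_(i < n) v ord0 i ^+ 2).
Definition unit_ball : set V := [set v | enorm v <= 1].

Definition usc_at (F : V -> set V) (x : V) : Prop :=
  forall U : set V, open U -> F x `<=` U ->
    \forall y \near x, F y `<=` U.
Definition lsc_at (F : V -> set V) (x : V) : Prop :=
  forall U : set V, open U -> F x `&` U !=set0 ->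
    \forall y \near x, F y `&` U !=set0.
Definition sv_continuous (F : V -> set V) : Prop :=
  forall x, usc_at F x /\ lsc_at F x.

Definition inflate (F : V -> set V) (eps : V -> R) : V -> set V :=
  fun x => [set f + eps x *: b | f in F x & b in unit_ball].

Definition abs_cont_on (phi : R -> V) (a b : R) : Prop :=
  forall e : R, 0 < e -> exists2 d : R, 0 < d &
    forall (k : nat) (u w : nat -> R),
      (forall i, (i < k)%N -> a <= u i /\ u i <= w i /\ w i <= b) ->
      (forall i j, (i < k)%N -> (j < k)%N -> i <> j -> w i <= u j \/ w j <= u i) ->
      \sum_(i < k) (w i - u i) < d ->
      \sum_(i < k) enorm (phi (w i) - phi (u i)) < e.

Definition loc_abs_cont (I : set R) (phi : R -> V) : Prop :=
  forall a b, a <= b -> `[a, b] `<=` I -> abs_cont_on phi a b.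

Definition is_solution (G : V -> set V) (I : set R) (phi : R -> V) : Prop :=
  [/\ is_interval I, I 0, loc_abs_cont I phi &
      exists N : set R, (@lebesgue_measure R).-negligible N /\
        forall t, I t -> ~ N t -> derivable phi t 1 /\ G (phi t) ('D_1 phi t)].

Definition is_max_solution (G : V -> set V) (I : set R) (phi : R -> V) : Prop :=
  is_solution G I phi /\
  forall (J : set R) (psi : R -> V), is_solution G J psi -> I `<=` J ->
    (forall t, I t -> psi t = phi t) -> J = I.

Definition forward_complete (G : V -> set V) : Prop :=
  forall I phi, is_max_solution G I phi -> forall M : R, exists2 t, I t & M < t.

Definition safe (G : V -> set V) (Xo Xu : set V) : Prop :=
  forall I phi, is_solution G I phi -> Xo (phi 0) ->
    forall t, I t -> 0 <= t -> ~ Xu (phi t).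

Definition pos_cont (eps : V -> R) : Prop :=
  continuous eps /\ forall x, 0 < eps x.

Definition margin (F : V -> set V) (Xo Xu : set V) (eps : V -> R) : Prop :=
  pos_cont eps /\ safe (inflate F eps) Xo Xu.

Definition reach (G : V -> set V) (t : R) (x : V) : set V :=
  [set y | exists I phi s, [/\ is_max_solution G I phi, phi 0 = x,
                             I s, 0 <= s <= t & y = phi s]].

Definition Kset (F : V -> set V) (eps : V -> R) (Xo : set V) : set V :=
  \bigcup_(t in [set t : R | 0 <= t]) \bigcup_(x in Xo) reach (inflate F eps) t x.

End Defs.

From HB Require Import structures.
From mathcomp Require Import all_boot all_order all_algebra.
From mathcomp Require Import all_classical all_reals all_analysis.
From mathcomp Require Import ring lra.
Import Order.TTheory GRing.Theory Num.Theory.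
Import numFieldNormedType.Exports.
Local Open Scope classical_set_scope.
Local Open Scope ring_scope.
Set Implicit Arguments. Unset Strict Implicit. Unset Printing Implicit Defensive.

(* Suppose [y] lies in the closure of [Xu] and in that of the [eps]-reachable
   set but not in the closure of [Xo].  Near [y] the velocities of the
   [eps]-inflated system are bounded, and, by the semicontinuity of [F] and the
   continuity of the margins, adding a small velocity to an [eps]-velocity at a
   point near [y] gives an [eps_o]-velocity at any other point near [y].  An
   [eps]-trajectory from [Xo] ending very close to [y] must have spent a time
   [h] near [y], since its speed there is bounded; adding to it during that time
   a linear ramp towards a point of [Xu] close to [y] produces an
   [eps_o]-trajectory from [Xo] into [Xu], contradicting robust safety. *)

Section EuclideanNorm.
Variables (R : realType) (n : nat).
Notation V := 'rV[R]_n.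
Implicit Types (u v : V).

Lemma sumsq_ge0 v : 0 <= \sum_(i < n) v ord0 i ^+ 2.
Proof. by apply: sumr_ge0 => i _; exact: sqr_ge0. Qed.

Lemma enorm_ge0 v : 0 <= enorm v.
Proof. exact: sqrtr_ge0. Qed.

Lemma enorm_sq v : enorm v ^+ 2 = \sum_(i < n) v ord0 i ^+ 2.
Proof. by rewrite /enorm sqr_sqrtr // sumsq_ge0. Qed.

Lemma enorm_coord v i : `|v ord0 i| <= enorm v.
Proof.
rewrite /enorm -sqrtr_sqr ler_sqrt ?sumsq_ge0 //.
by rewrite (bigD1 i) //= lerDl; apply: sumr_ge0 => j _; exact: sqr_ge0.
Qed.

Lemma enormZ (a : R) v : enorm (a *: v) = `|a| * enorm v.
Proof.
rewrite /enorm (eq_bigr (fun i => a ^+ 2 * v ord0 i ^+ 2)); last first.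
  by move=> i _; rewrite mxE exprMn.
by rewrite -mulr_sumr sqrtrM ?sqr_ge0 // sqrtr_sqr.
Qed.

Lemma cauchy_schwarz_sum (I : finType) (a b : I -> R) :
  (\sum_i a i * b i) ^+ 2 <= (\sum_i a i ^+ 2) * (\sum_i b i ^+ 2).
Proof.
set A := \sum_i a i ^+ 2; set B := \sum_i b i ^+ 2; set S := \sum_i a i * b i.
have A0 : 0 <= A by apply: sumr_ge0 => i _; exact: sqr_ge0.
have B0 : 0 <= B by apply: sumr_ge0 => i _; exact: sqr_ge0.
have quad_ge0 t : 0 <= A + 2 * t * S + t ^+ 2 * B.
  have -> : A + 2 * t * S + t ^+ 2 * B = \sum_i (a i + t * b i) ^+ 2.
    rewrite /A /S /B mulr_sumr mulr_sumr -!big_split /=.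
    by apply: eq_bigr => i _; rewrite sqrrD exprMn; lra.
  by apply: sumr_ge0 => i _; exact: sqr_ge0.
have [B00|Bn0] := eqVneq B 0.
  suff -> : S = 0 by rewrite expr0n /= mulr_ge0.
  apply/eqP/negPn/negP => S0.
  have := quad_ge0 (- (A + 1) / (2 * S)); rewrite B00 mulr0 addr0.
  have -> : A + 2 * (- (A + 1) / (2 * S)) * S = -1 by field.
  by rewrite lerNr oppr0 ler10.
have Bp : 0 < B by rewrite lt_def Bn0 B0.
have := quad_ge0 (- S / B).
have -> : A + 2 * (- S / B) * S + (- S / B) ^+ 2 * B = A - S ^+ 2 / B.
  by field; rewrite Bn0.
by rewrite subr_ge0 ler_pdivrMr // mulrC.
Qed.

Lemma enormD u v : enorm (u + v) <= enorm u + enorm v.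
Proof.
rewrite -(@ler_pXn2r _ 2) ?nnegrE ?addr_ge0 ?enorm_ge0 //.
rewrite enorm_sq sqrrD !enorm_sq.
have -> : \sum_i (u + v) ord0 i ^+ 2 =
  \sum_i u ord0 i ^+ 2 + 2 * \sum_i u ord0 i * v ord0 i + \sum_i v ord0 i ^+ 2.
  rewrite mulr_sumr -!big_split /=; apply: eq_bigr => i _; rewrite mxE sqrrD; lra.
rewrite lerD2r -mulr_natr lerD2l mul1r mulrC -[X in _ <= X]mulr_natr ler_pM2r //.
have := cauchy_schwarz_sum (fun i => u ord0 i) (fun i => v ord0 i).
rewrite -!enorm_sq -exprMn => cs.
apply: le_trans (ler_norm _) _.
rewrite -(@ler_pXn2r _ 2) ?nnegrE ?mulr_ge0 ?enorm_ge0 //.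
by rewrite real_normK // num_real.
Qed.

Lemma coord_le_norm v i : `|v ord0 i| <= `|v|.
Proof.
have /mapP[j Hj ->] : `|v ord0 i| \in [seq `|v x.1 x.2| | x : 'I_1 * 'I_n].
  by apply/mapP; exists (ord0, i) => //=; rewrite mem_enum.
by rewrite [leRHS]/Num.norm /= mx_normrE; apply/bigmax_geP; right => /=; exists j.
Qed.

Lemma norm_le_coords v r : 0 <= r -> (forall j, `|v ord0 j| <= r) -> `|v| <= r.
Proof.
move=> r0 h; rewrite [leLHS]/Num.norm /= mx_normrE; apply/bigmax_leP; split => //.
by move=> [i j] _ /=; rewrite (ord1 i).
Qed.

Lemma norm_le_enorm v : `|v| <= enorm v.
Proof. exact/norm_le_coords/enorm_coord/enorm_ge0. Qed.

Lemma enorm_le_norm v : enorm v <= n.+1%:R * `|v|.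
Proof.
rewrite -(@ler_pXn2r _ 2) ?nnegrE ?mulr_ge0 ?enorm_ge0 //.
rewrite enorm_sq exprMn.
apply: (@le_trans _ _ (\sum_(i < n) `|v| ^+ 2)).
  apply: ler_sum => i _; rewrite -real_normK ?num_real //.
  by rewrite lerXn2r ?nnegrE ?coord_le_norm.
rewrite sumr_const card_ord -[leLHS]mulr_natl; apply: ler_wpM2r; first exact: sqr_ge0.
rewrite -natrX ler_nat expnS expn1.
exact: leq_trans (leqnSn n) (leq_pmulr _ (ltn0Sn n)).
Qed.

End EuclideanNorm.

Section IncrementBound.
Variable R : realType.

Definition subinterval_family (U : set R) (a t : R) k (u w : nat -> R) :=
 [/\ (forall i, (i < k)%N -> a <= u i /\ u i <= w i /\ w i <= t),
     (forall i, (i < k)%N -> forall x, u i <= x -> x <= w i -> U x) &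
     (forall i j, (i < k)%N -> (j < k)%N -> i <> j -> w i <= u j \/ w j <= u i)].

Lemma subinterval_family_le U a t t' k u w : t <= t' ->
  subinterval_family U a t k u w -> subinterval_family U a t' k u w.
Proof.
move=> tt' [h1 h2 h3]; split => // i ik; have [? [? ?]] := h1 i ik.
by split => //; split => //; apply: le_trans tt'.
Qed.

Definition increment_controlled (f : R -> R) U a K t :=
  exists k u w, subinterval_family U a t k u w /\
    f t - f a <= K * (t - a) + \sum_(i < k) (f (w i) - f (u i)).

Lemma increment_controlled_slope f U a K t t' : t <= t' ->
  f t' - f t <= K * (t' - t) ->
  increment_controlled f U a K t -> increment_controlled f U a K t'.
Proof.
move=> tt' sl [k [u [w [fm ineq]]]]; exists k, u, w; split.
  exact: subinterval_family_le fm.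
have -> : f t' - f a = (f t' - f t) + (f t - f a) by ring.
have -> : K * (t' - a) = K * (t' - t) + K * (t - a) by ring.
by have := lerD sl ineq; lra.
Qed.

Lemma increment_controlled_extend f U a K t t' : 0 <= K -> a <= t -> t <= t' ->
  (forall x, t <= x -> x <= t' -> U x) ->
  increment_controlled f U a K t -> increment_controlled f U a K t'.
Proof.
move=> K0 at_ tt' Ut [k [u [w [[h1 h2 h3] ineq]]]].
pose u' i := if i == k then t else u i.
pose w' i := if i == k then t' else w i.
exists k.+1, u', w'; split.
  split.
  - move=> i; rewrite ltnS leq_eqVlt => /orP[/eqP ->|ik].
      by rewrite /u' /w' eqxx.
    rewrite /u' /w' (ltn_eqF ik); have [? [? ?]] := h1 i ik.
    by split => //; split => //; apply: le_trans tt'.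
  - move=> i; rewrite ltnS leq_eqVlt => /orP[/eqP ->|ik].
      by rewrite /u' /w' eqxx; exact: Ut.
    by rewrite /u' /w' (ltn_eqF ik); exact: h2.
  - move=> i j; rewrite ltnS leq_eqVlt => /orP[/eqP->|ik];
      rewrite ltnS leq_eqVlt => /orP[/eqP->|jk] ij //; rewrite /u' /w' ?eqxx.
    + by right; rewrite (ltn_eqF jk); have [_ [_ ?]] := h1 j jk.
    + by left; rewrite (ltn_eqF ik); have [_ [_ ?]] := h1 i ik.
    + by rewrite (ltn_eqF ik) (ltn_eqF jk); exact: h3.
rewrite big_ord_recr /= /u' /w' eqxx.
rewrite (eq_bigr (fun i : 'I_k => f (w i) - f (u i))); last first.
  by move=> i _; rewrite (ltn_eqF (ltn_ord i)).
have -> : f t' - f a = (f t' - f t) + (f t - f a) by ring.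
have : K * (t - a) <= K * (t' - a) by rewrite ler_wpM2l // lerD2r.
lra.
Qed.

Section RealInduction.
Variables (f : R -> R) (a b K e : R) (U : set R).
Hypotheses (ab : a <= b) (K0 : 0 <= K) (oU : open U).
Hypothesis small_in_U : forall k u w, subinterval_family U a b k u w ->
  \sum_(i < k) (f (w i) - f (u i)) <= e.
Hypothesis slope_off_U : forall c, a <= c -> c <= b -> ~ U c -> exists2 eta, 0 < eta &
  forall t, a <= t -> t <= b -> `|t - c| < eta ->
    (t <= c -> f c - f t <= K * (c - t)) /\ (c <= t -> f t - f c <= K * (t - c)).

(* Inside [U] the control is propagated by adding an interval to the family,
   outside [U] by the local slope bound. *)
Lemma increment_controlled_local c : a <= c -> c <= b -> exists2 eta, 0 < eta &
  forall t t', a <= t -> c - eta < t -> t <= c -> c <= t' -> t' <= b -> t' < c + eta ->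
  increment_controlled f U a K t -> increment_controlled f U a K t'.
Proof.
move=> ac cb; have [Uc|nUc] := pselect (U c).
  have /nbhs_ballP [eta /= eta0 ballU] := (oU : open U) c Uc.
  exists eta => // t t' at_ ct tc ct' t'b t'c; apply: increment_controlled_extend => //.
    exact: le_trans ct'.
  move=> x tx xt'; apply: ballU; rewrite /ball /= ltr_norml; apply/andP; split; lra.
have [eta eta0 slope] := slope_off_U ac cb nUc.
exists eta => // t t' at_ ct tc ct' t'b t'c Pt.
have slope_t : `|t - c| < eta by rewrite ler0_norm ?subr_le0 //; lra.
have slope_t' : `|t' - c| < eta by rewrite ger0_norm ?subr_ge0 //; lra.
apply: (increment_controlled_slope ct' ((slope t' (le_trans ac ct') t'b slope_t').2 ct')).
exact: (increment_controlled_slope tc ((slope t at_ (le_trans tc cb) slope_t).1 tc) Pt).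
Qed.

(* Real induction: the supremum of the points up to which the increment of [f]
   is controlled is [b], and is reached. *)
Lemma increment_le_slope_off_open : f b - f a <= K * (b - a) + e.
Proof.
pose S := [set t | (a <= t /\ t <= b) /\ increment_controlled f U a K t].
have Sa : S a.
  split; first by split.
  exists 0%N, (fun=> 0), (fun=> 0); split; first by split.
  by rewrite big_ord0 !subrr mulr0 addr0.
have hs : has_sup S by split; [exists a | exists b => t [[_ ?] _]].
set c := sup S.
have ac : a <= c by exact: sup_upper_bound hs _ Sa.
have cb : c <= b by apply: ge_sup; [exists a | move=> t [[_ ?] _]].
have [eta eta0 local] := increment_controlled_local ac cb.
have [t St ct] := sup_adherent eta0 hs.
have tc : t <= c by exact: sup_upper_bound hs _ St.
have ceta : c < c + eta by rewrite ltrDl.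
have [[at_ _] Pt] := St.
have Pc := local t c at_ ct tc (lexx c) cb ceta Pt.
have cbe : c = b.
  apply/eqP; rewrite eq_le cb /= leNgt; apply/negP => cb'.
  have [t' [ct' t'b t'c]] : exists t', [/\ c < t', t' <= b & t' < c + eta].
    exists (Num.min b (c + eta / 2)); split; first by rewrite lt_min cb' /=; lra.
      by rewrite ge_min lexx.
    by rewrite gt_min; apply/orP; right; lra.
  have St' : S t' by split; [split; lra | exact: local t t' at_ ct tc (ltW ct') t'b t'c Pt].
  by have := sup_upper_bound hs St'; rewrite -/c; lra.
move: Pc; rewrite cbe => -[k [u [w [fm ineq]]]].
by apply: le_trans ineq _; rewrite lerD2l; exact: small_in_U.
Qed.

End RealInduction.

Local Notation mu := (@lebesgue_measure R).

Lemma subinterval_family_length_lt (U : set R) a b k u w d :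
  open U -> (mu U < d%:E)%E -> subinterval_family U a b k u w ->
  \sum_(i < k) (w i - u i) < d.
Proof.
move=> oU Ud [h1 h2 h3].
pose F i := [set` Interval (BRight (u i)) (BLeft (w i))].
have mF i : measurable (F i) by exact: measurable_itv.
have tF : trivIset `I_k F.
  move=> i j /= ik jk [x [Fi Fj]]; apply/eqP/negPn/negP => /eqP ij.
  move: Fi Fj; rewrite /F /= !in_itv /= => /andP[ux xw] /andP[ux' xw'].
  have [l|l] := h3 i j ik jk ij.
    by have := lt_trans xw (le_lt_trans l ux'); rewrite ltxx.
  by have := lt_trans xw' (le_lt_trans l ux); rewrite ltxx.
have sub : \big[setU/set0]_(i < k) F i `<=` U.
  move=> x /=; rewrite -bigcup_mkord => -[i /= ik].
  rewrite /F /= in_itv /= => /andP[ux xw].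
  by apply: h2 ik x (ltW ux) (ltW xw).
have mU : measurable (\big[setU/set0]_(i < k) F i).
  by apply: bigsetU_measurable => i _.
have := measure_semi_additive_ord_I mu (fun i _ => mF i) tF mU.
have -> : \sum_(i < k) mu (F i) = (\sum_(i < k) (w i - u i))%:E.
  rewrite -sumEFin; apply: eq_bigr => i _; rewrite lebesgue_measure_itv /=.
  rewrite lte_fin; case: ltP => // wu.
  have [_ [uw _]] := h1 i (ltn_ord i).
  have -> : w i = u i by apply/eqP; rewrite eq_le uw wu.
  by rewrite subrr.
move=> eq; rewrite -lte_fin -eq; apply: le_lt_trans Ud.
by apply: le_measure => //; rewrite inE //; exact: measurable_realfun.open_measurable.
Qed.

Lemma negligible_open_cover (N : set R) d : mu.-negligible N -> 0 < d ->
  exists U, [/\ open U, N `<=` U & (mu U < d%:E)%E].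
Proof.
move=> [A [mA A0 NA]] d0.
have Afin : (mu A < +oo)%E by rewrite A0 ltry.
have [U [oU AU UA]] := lebesgue_regularity_outer mA Afin d0.
exists U; split => //; first exact: subset_trans AU.
have mU : measurable U by exact: measurable_realfun.open_measurable.
rewrite -(setDUK AU) measureU //; [|exact: measurableD|exact: setDIK].
by change (mu A + mu (U `\` A) < d%:E)%E; rewrite A0 add0e.
Qed.

Lemma negligible_set1 (a : R) : mu.-negligible [set a].
Proof.
by exists [set a]; split; [exact: measurable_set1 | exact: lebesgue_measure_set1 | ].
Qed.

End IncrementBound.

Section LipschitzBound.
Variables (R : realType) (n : nat).
Notation V := 'rV[R]_n.
Local Notation mu := (@lebesgue_measure R).

Lemma derivable_local_lipschitz (phi : R -> V) t (M : R) : derivable phi t 1 ->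
  `|'D_1 phi t| <= M -> forall e : R, 0 < e -> exists2 eta : R, 0 < eta &
  forall t', `|t' - t| < eta -> `|phi t' - phi t| <= (M + e) * `|t' - t|.
Proof.
move=> dphi DM e e0.
have /cvgrPdist_lt /(_ e e0) /nbhs_ballP [eta /= eta0 Heta] := dphi.
exists eta => // t' htt'.
have [->|neq] := eqVneq t' t; first by rewrite !subrr normr0 normr0 mulr0.
have h0 : t' - t != 0 by rewrite subr_eq0.
have := Heta (t' - t); rewrite /ball /= sub0r normrN => /(_ htt' h0).
rewrite /= scaler1 subrK => hlt.
have -> : phi t' - phi t = (t' - t) *: ((t' - t)^-1 *: (phi t' - phi t)).
  by rewrite scalerA divff // scale1r.
rewrite normrZ mulrC ler_wpM2r //.
rewrite -[X in `|X|](subrK ('D_1 phi t)).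
apply: le_trans (ler_normD _ _) _.
rewrite addrC lerD // ltW // -normrN opprB.
by move: hlt; rewrite /derive.
Qed.

Lemma signed_coord_le_norm (x : V) (s : R) j : `|s| = 1 -> s * x ord0 j <= `|x|.
Proof.
by move=> s1; apply: le_trans (ler_norm _) _; rewrite normrM s1 mul1r coord_le_norm.
Qed.

Lemma signed_coord_le_enorm (x : V) (s : R) j : `|s| = 1 -> s * x ord0 j <= enorm x.
Proof.
by move=> s1; apply: le_trans (ler_norm _) _; rewrite normrM s1 mul1r enorm_coord.
Qed.

(* Each signed coordinate of [phi] is handled by [increment_le_slope_off_open]
   with [U] a small open cover of the exceptional set: absolute continuity makes
   the increments over subintervals of [U] small. *)
Lemma abs_cont_lipschitz (phi : R -> V) a b M N :
 a <= b -> 0 <= M -> mu.-negligible N -> abs_cont_on phi a b ->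
 (forall t, a <= t -> t <= b -> ~ N t -> derivable phi t 1 /\ `|'D_1 phi t| <= M) ->
 `|phi b - phi a| <= M * (b - a).
Proof.
move=> ab M0 negN ac hd.
suff key : forall (s : R) j, `|s| = 1 ->
    s * (phi b ord0 j - phi a ord0 j) <= M * (b - a).
  apply: norm_le_coords; first by rewrite mulr_ge0 // subr_ge0.
  move=> j; rewrite !mxE ler_norml; apply/andP; split.
  - by rewrite lerNl -mulN1r; apply: key; rewrite normrN normr1.
  - by rewrite -[X in X <= _]mul1r; apply: key; rewrite normr1.
move=> s j s1.
apply/ler_addgt0Pr => e e0.
pose f t := s * phi t ord0 j.
have f_incr x y : f y - f x = s * (phi y - phi x) ord0 j by rewrite /f -mulrBr !mxE.
have e20 : 0 < e / 2 by rewrite divr_gt0.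
have [d d0 hac] := ac (e / 2) e20.
have [U [oU NU Ud]] := negligible_open_cover negN d0.
pose e' := e / 2 / (b - a + 1).
have ba1 : 0 < b - a + 1 by rewrite ltr_wpDl // subr_ge0.
have e'0 : 0 < e' by rewrite divr_gt0.
have e'ba : e' * (b - a) <= e / 2.
  by rewrite /e' mulrAC ler_pdivrMr // ler_pM2l //; lra.
have small_in_U k u w : subinterval_family U a b k u w ->
    \sum_(i < k) (f (w i) - f (u i)) <= e / 2.
  move=> fm; have [h1 _ h3] := fm.
  apply: le_trans (ltW (hac k u w h1 h3 (subinterval_family_length_lt oU Ud fm))).
  by apply: ler_sum => i _; rewrite f_incr; exact: signed_coord_le_enorm.
have slope_off_U c : a <= c -> c <= b -> ~ U c -> exists2 eta, 0 < eta &
    forall t, a <= t -> t <= b -> `|t - c| < eta ->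
      (t <= c -> f c - f t <= (M + e') * (c - t)) /\
      (c <= t -> f t - f c <= (M + e') * (t - c)).
  move=> ac' cb nUc.
  have [dc Dc] := hd c ac' cb (fun Nc => nUc (NU c Nc)).
  have [eta eta0 Heta] := derivable_local_lipschitz dc Dc e'0.
  exists eta => // t _ _ tc; have := Heta t tc => h.
  split => ht; rewrite f_incr; apply: le_trans (signed_coord_le_norm _ _ s1) _.
  - by rewrite distrC; apply: le_trans h _; rewrite distrC ger0_norm ?subr_ge0.
  - by apply: le_trans h _; rewrite ger0_norm ?subr_ge0.
have := increment_le_slope_off_open ab (addr_ge0 M0 (ltW e'0)) oU small_in_U slope_off_U.
rewrite /f -mulrBr => h; apply: le_trans h _.
by rewrite mulrDl -addrA lerD2l; lra.
Qed.

Lemma abs_cont_uniform (phi : R -> V) a b : abs_cont_on phi a b ->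
  forall e : R, 0 < e -> exists2 d : R, 0 < d & forall x y, a <= x -> x <= y -> y <= b ->
    y - x < d -> `|phi y - phi x| < e.
Proof.
move=> ac e e0; have [d d0 H] := ac e e0; exists d => // x y ax xy yb yxd.
have := H 1%N (fun=> x) (fun=> y).
rewrite !big_ord1 => /(_ _ _ yxd) h.
apply: le_lt_trans (norm_le_enorm _) _; apply: h.
  by move=> i _; split => //; split.
by move=> i j; rewrite !ltnS !leqn0 => /eqP -> /eqP ->.
Qed.

Lemma abs_cont_last_exit (phi : R -> V) a b y (d : R) :
  a <= b -> abs_cont_on phi a b -> d <= `|y - phi a| ->
  exists t0, [/\ a <= t0 <= b, d <= `|y - phi t0| &
    forall t, t0 < t -> t <= b -> `|y - phi t| < d].
Proof.
move=> ab ac da.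
pose T := [set t | (a <= t /\ t <= b) /\ d <= `|y - phi t|].
have Ta : T a by split; first by split.
have hsT : has_sup T by split; [exists a | exists b => t [[_ ?] _]].
have ubT t : T t -> t <= sup T by move=> Tt; exact: sup_upper_bound hsT _ Tt.
have at0 : a <= sup T by exact: ubT.
have t0b : sup T <= b by apply: ge_sup; [exists a | move=> t [[_ ?] _]].
exists (sup T); split; first by rewrite at0 t0b.
  apply/ler_addgt0Pr => e e0.
  have [eta eta0 Heta] := abs_cont_uniform ac e0.
  have [t2 [[at2 t2b] Tt2] ht2] := sup_adherent eta0 hsT.
  have t2t0 := ubT t2 (conj (conj at2 t2b) Tt2).
  have := Heta t2 (sup T) at2 t2t0 t0b; rewrite ltrBlDl -ltrBlDr => /(_ ht2).
  by have := ler_distD (phi (sup T)) y (phi t2); lra.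
move=> t tt0 tb; rewrite ltNge; apply/negP => dt.
by have := ubT t (conj (conj (le_trans at0 (ltW tt0)) tb) dt); lra.
Qed.

End LipschitzBound.

Section SetValuedMaps.
Variables (R : realType) (n : nat).
Notation V := 'rV[R]_n.
Implicit Types (F : V -> set V) (y : V).

Lemma closure_normP (A : set V) y :
  closure A y <-> forall r : R, 0 < r -> exists2 x, A x & `|y - x| < r.
Proof.
split => [cA r r0|near_A B /nbhs_ballP [r r0 sub]].
  by have [x [Ax]] := cA _ (nbhsx_ballx y r r0); rewrite -ball_normE => yx; exists x.
have [x Ax yx] := near_A r r0; exists x; split => //.
by apply: sub; rewrite -ball_normE.
Qed.

Lemma not_closure_normP (A : set V) y :
  ~ closure A y -> exists2 r : R, 0 < r & forall x, `|y - x| < r -> ~ A x.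
Proof.
move=> nA; apply: contrapT => H; apply/nA/closure_normP => r r0.
by apply: contrapT => H2; apply: H; exists r => // x yx Ax; apply: H2; exists x.
Qed.

Lemma usc_near_excess F y (g : R) : usc_at F y -> 0 < g ->
  \forall x \near y, forall f, F x f -> exists2 f0, F y f0 & `|f0 - f| < g.
Proof.
move=> usc g0.
pose U := [set f : V | exists2 f0, F y f0 & `|f0 - f| < g].
have oU : open U.
  rewrite openE => f [f0 Ff0 f0f]; apply/nbhs_ballP.
  exists (g - `|f0 - f|) => [|f' /=]; first by rewrite /= subr_gt0.
  rewrite -ball_normE /= => ff'; exists f0 => //.
  by apply: le_lt_trans (ler_distD f _ _) _; rewrite addrC -ltrBrDr.
have sub : F y `<=` U by move=> f Ff; exists f => //; rewrite subrr normr0.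
exact: usc U oU sub.
Qed.

Lemma lsc_near_excess F y (g : R) : compact (F y) -> lsc_at F y -> 0 < g ->
  \forall x \near y, forall f0, F y f0 -> exists2 f, F x f & `|f0 - f| < g.
Proof.
move=> cF lsc g0.
have g20 : 0 < g / 2 by rewrite divr_gt0.
have := cF; rewrite compact_cover => /(_ V (F y) (fun a => ball a (g / 2))).
case=> [a _|a Fa|D Dsub cov]; first exact: ball_open.
  by exists a => //; exact: ballxx.
have near_D := @filter_bigI _ _ D
  (fun a => [set x | F x `&` ball a (g / 2) !=set0]) (nbhs y) (nbhs_filter y)
  (fun a aD => lsc _ (ball_open a (g / 2))
     (ex_intro _ a (conj (set_mem (Dsub a aD)) (ballxx a g20)))).
apply: filterS near_D => x near_x f0 Ff0.
have [a /= aD af0] := cov f0 Ff0.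
have [f [Ff af]] := near_x a aD.
exists f => //; rewrite -ball_normE /= in af0 af.
by apply: le_lt_trans (ler_distD a f0 f) _; rewrite distrC; lra.
Qed.

Lemma inflateP F (e : V -> R) x d : 0 < e x ->
  inflate F e x d <-> exists2 f, F x f & enorm (d - f) <= e x.
Proof.
move=> e0; split.
  move=> [f Ff [b bb <-]]; exists f => //.
  by rewrite addrC addKr enormZ gtr0_norm // -[leRHS]mulr1 ler_wpM2l // ltW.
move=> [f Ff df]; exists f => //; exists ((e x)^-1 *: (d - f)).
  by rewrite /unit_ball /= enormZ gtr0_norm ?invr_gt0 // mulrC ler_pdivrMr // mul1r.
by rewrite scalerA divff ?gt_eqF // scale1r addrC subrK.
Qed.

Lemma inflate_le F (e1 e2 : V -> R) x d : 0 < e1 x -> e1 x <= e2 x ->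
  inflate F e1 x d -> inflate F e2 x d.
Proof.
move=> e10 e12 /(inflateP _ _ e10) [f Ff df].
by apply/(inflateP _ _ (lt_le_trans e10 e12)); exists f => //; exact: le_trans e12.
Qed.

Lemma inflate_norm_le F (e : V -> R) y x d (B g : R) : 0 < e x ->
  (forall f0, F y f0 -> `|f0| <= B) ->
  (forall f, F x f -> exists2 f0, F y f0 & `|f0 - f| < g) ->
  inflate F e x d -> `|d| <= B + g + e x.
Proof.
move=> ex0 FyB exc /(inflateP _ _ ex0) [f Ff df].
have [f0 Ff0 f0f] := exc f Ff.
have := FyB f0 Ff0; have := ler_distD f0 f 0; rewrite !subr0 distrC.
have := ler_distD f d 0; rewrite !subr0.
by have := norm_le_enorm (d - f); lra.
Qed.

(* Going from [x] to [x'] through the excesses to and from [F y] moves a point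
   of [F x] by less than [2 g] in the max-norm, i.e. by less than
   [2 n.+1 g] in the Euclidean norm. *)
Lemma inflate_add_small F (e e' : V -> R) y x x' d w (g : R) : 0 < e x -> 0 < g ->
  (forall f, F x f -> exists2 f0, F y f0 & `|f0 - f| < g) ->
  (forall f0, F y f0 -> exists2 f, F x' f & `|f0 - f| < g) ->
  e x + 3 * (n.+1%:R * g) < e' x' ->
  inflate F e x d -> `|w| < g -> inflate F e' x' (d + w).
Proof.
move=> ex0 g0 exc exc' e_lt /(inflateP _ _ ex0) [f Ff df] wg.
have [f0 Ff0 f0f] := exc f Ff.
have [f' Ff' f0f'] := exc' f0 Ff0.
have ng0 : 0 < n.+1%:R * g by rewrite mulr_gt0.
have ff' : enorm (f - f') <= 2 * (n.+1%:R * g).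
  apply: le_trans (enorm_le_norm _) _; rewrite mulrCA ler_wpM2l //.
  by have := ler_distD f0 f f'; rewrite distrC in f0f; lra.
have ew : enorm w < n.+1%:R * g.
  by apply: le_lt_trans (enorm_le_norm _) _; rewrite ltr_pM2l.
have e'0 : 0 < e' x' by lra.
apply/(inflateP _ _ e'0); exists f' => //.
have -> : d + w - f' = (d - f) + (f - f') + w by rewrite addrA subrK addrAC.
apply: le_trans (enormD _ _) _; apply: le_trans (lerD (enormD _ _) (lexx _)) _.
lra.
Qed.

(* A fifth of the gap [eps_o y - eps y] is spent on each of the upper and lower
   semicontinuity of [F], the continuity of [eps] and of [eps_o], and the
   perturbation [w]. *)
Lemma inflate_locally_robust F (eps eps_o : V -> R) y :
  usc_at F y -> lsc_at F y -> compact (F y) ->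
  {for y, continuous eps} -> {for y, continuous eps_o} ->
  (forall x, 0 < eps x) -> eps y < eps_o y ->
  exists rho M g : R, [/\ 0 < rho, 0 < M, 0 < g,
    forall x d, `|y - x| < rho -> inflate F eps x d -> `|d| <= M &
    forall x x' d w, `|y - x| < rho -> `|y - x'| < rho ->
       inflate F eps x d -> `|w| < g -> inflate F eps_o x' (d + w)].
Proof.
move=> usc lsc cFy ce ceo epos eps_lt.
pose c := (eps_o y - eps y) / 5.
have c0 : 0 < c by rewrite divr_gt0 // subr_gt0.
have c5 : 5 * c = eps_o y - eps y by rewrite /c; field.
pose g := c / n.+1%:R.
have g0 : 0 < g by rewrite divr_gt0.
have gc : n.+1%:R * g = c by rewrite mulrC divfK.
have [B [_ HB]] := compact_bounded cFy.
have FyB f0 : F y f0 -> `|f0| <= `|B| + 1.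
  by apply: HB; apply: le_lt_trans (ler_norm B) _; lra.
have : \forall x \near y, [/\ forall f, F x f -> exists2 f0, F y f0 & `|f0 - f| < g,
    forall f0, F y f0 -> exists2 f, F x f & `|f0 - f| < g,
    eps x < eps y + c & eps_o y - c < eps_o x].
  have /cvgrPdist_lt /(_ c c0) ce' := ce.
  have /cvgrPdist_lt /(_ c c0) ceo' := ceo.
  near=> x; split.
  - by near: x; exact: usc_near_excess.
  - by near: x; exact: lsc_near_excess.
  - have : `|eps y - eps x| < c by near: x.
    by have := ler_norm (eps x - eps y); rewrite distrC; lra.
  - have : `|eps_o y - eps_o x| < c by near: x.
    by have := ler_norm (eps_o y - eps_o x); lra.
move=> /nbhs_ballP [rho /= rho0]; rewrite -ball_normE /= => near_y.
have epsy0 := epos y.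
exists rho, (`|B| + 1 + g + eps y + c), g; split => //.
- by have := normr_ge0 B; lra.
- move=> x d /near_y [exc _ epsx _] dx.
  by have := inflate_norm_le (epos x) FyB exc dx; lra.
move=> x x' d w /near_y [exc _ epsx _] /near_y [_ exc' _ epsox'].
by apply: inflate_add_small (epos x) g0 exc exc' _; rewrite gc; lra.
Unshelve. all: by end_near.
Qed.

End SetValuedMaps.

Section RampPerturbation.
Variables (R : realType) (n : nat).
Notation V := 'rV[R]_n.

Lemma is_derive_affine (g : R -> V) t w : (forall h, g (h + t) - g t = h *: w) ->
  is_derive t 1 g w.
Proof.
move=> gE.
have near_w : \forall h \near 0^', w = h^-1 *: ((g \o shift t) (h *: 1) - g t).
  near=> h.
  have h0 : h != 0 by near: h; exact: nbhs_dnbhs_neq.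
  by rewrite /= scaler1 gE scalerA mulVf // scale1r.
have cv : (fun h : R => h^-1 *: ((g \o shift t) (h *: 1) - g t)) @ 0^' --> w.
  exact: cvg_trans (near_eq_cvg near_w) (cvg_cst w).
apply: DeriveDef; first by apply/cvg_ex; exists w.
exact: norm_cvg_lim cv.
Unshelve. all: by end_near.
Qed.

Lemma derivable_add_affine_scale (phi : R -> V) (v : V) (r : R -> R) t (al be : R) :
  derivable phi t 1 -> (\forall t' \near t, r t' = al * t' + be) ->
  derivable (fun t => phi t + r t *: v) t 1 /\
  'D_1 (fun t => phi t + r t *: v) t = 'D_1 phi t + al *: v.
Proof.
move=> dphi hr.
have hg : is_derive t 1 (fun t' => (al * t' + be) *: v) (al *: v).
  apply: is_derive_affine => h.
  by rewrite -scalerBl scalerA; congr (_ *: _); ring.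
have hp : is_derive t 1 phi ('D_1 phi t) by apply: DeriveDef.
have hn : \near t, (phi + (fun t' => (al * t' + be) *: v)) t = phi t + r t *: v.
  by apply: filterS hr => x ->.
by have [] := near_eq_is_derive hn (is_deriveD hp hg).
Qed.

Lemma abs_cont_add_lipschitz_scale (phi : R -> V) (r : R -> R) (v : V) a b L : 0 <= L ->
  abs_cont_on phi a b -> (forall x y, x <= y -> `|r y - r x| <= L * (y - x)) ->
  abs_cont_on (fun t => phi t + r t *: v) a b.
Proof.
move=> L0 ac Lr e e0.
have e20 : 0 < e / 2 by rewrite divr_gt0.
have [d1 d10 H1] := ac (e / 2) e20.
pose K := L * enorm v + 1.
have K0 : 0 < K by rewrite /K ltr_wpDl // mulr_ge0 // enorm_ge0.
have d20 : 0 < e / 2 / K by rewrite divr_gt0.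
exists (Num.min d1 (e / 2 / K)); first by rewrite lt_min d10 d20.
move=> k u w hi hd hs.
have hs1 : \sum_(i < k) (w i - u i) < d1 by apply: lt_le_trans hs _; rewrite ge_min lexx.
have hs2 : \sum_(i < k) (w i - u i) < e / 2 / K.
  by apply: lt_le_trans hs _; rewrite ge_min lexx orbT.
have := H1 k u w hi hd hs1 => h1.
apply: (@le_lt_trans _ _ (\sum_(i < k) enorm (phi (w i) - phi (u i)) +
   K * \sum_(i < k) (w i - u i))).
  rewrite mulr_sumr -big_split /=; apply: ler_sum => i _.
  have [ui [uw wb]] := hi i (ltn_ord i).
  have -> : phi (w i) + r (w i) *: v - (phi (u i) + r (u i) *: v) =
    (phi (w i) - phi (u i)) + (r (w i) - r (u i)) *: v.
    by rewrite scalerBl opprD addrACA.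
  apply: le_trans (enormD _ _) _; rewrite lerD2l enormZ.
  apply: le_trans (_ : L * (w i - u i) * enorm v <= _).
    by rewrite ler_wpM2r ?enorm_ge0 // Lr.
  rewrite /K mulrDl mul1r mulrAC lerDl subr_ge0 //.
have : K * \sum_(i < k) (w i - u i) < e / 2.
  by rewrite mulrC -ltr_pdivlMr.
move=> h2; apply: lt_le_trans (ltrD h1 h2) _; lra.
Qed.

Definition clamp01 (a : R) : R := if a <= 0 then 0 else if 1 <= a then 1 else a.

Lemma clamp01_lipschitz (a b : R) : a <= b -> 0 <= clamp01 b - clamp01 a <= b - a.
Proof.
rewrite /clamp01 => ab.
by case: (leP a 0) => ?; case: (leP 1 a) => ?; case: (leP b 0) => ?;
  case: (leP 1 b) => ?; apply/andP; split; lra.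
Qed.

Definition ramp (a h t : R) : R := clamp01 ((t - a) / h).

Lemma ramp_ge0 a h t : 0 <= ramp a h t.
Proof.
rewrite /ramp /clamp01; set x := (t - a) / h.
by case: (leP x 0) => ?; case: (leP 1 x) => ?; lra.
Qed.

Lemma ramp_le1 a h t : ramp a h t <= 1.
Proof.
rewrite /ramp /clamp01; set x := (t - a) / h.
by case: (leP x 0) => ?; case: (leP 1 x) => ?; lra.
Qed.

Section RampLemmas.
Variables (a h : R).
Hypothesis h0 : 0 < h.

Lemma ramp_lipschitz t1 t2 : t1 <= t2 ->
  `|ramp a h t2 - ramp a h t1| <= h^-1 * (t2 - t1).
Proof.
move=> t12.
have /clamp01_lipschitz/andP[r0 r1] : (t1 - a) / h <= (t2 - a) / h.
  by rewrite ler_pM2r ?invr_gt0 // lerD2r.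
rewrite /ramp ger0_norm //; apply: le_trans r1 _.
by rewrite -mulrBl mulrC; apply: ler_wpM2l; [rewrite invr_ge0 ltW | lra].
Qed.

Lemma ramp_eq0 t : t <= a -> ramp a h t = 0.
Proof. by move=> ta; rewrite /ramp /clamp01 pmulr_lle0 ?invr_gt0 // subr_le0 ta. Qed.

Lemma ramp_affine t : a <= t -> t <= a + h -> ramp a h t = (t - a) / h.
Proof.
move=> at_ tah; rewrite /ramp /clamp01; set x := (t - a) / h.
have x0 : 0 <= x by rewrite /x divr_ge0 ?subr_ge0 // ltW.
have x1 : x <= 1 by rewrite /x ler_pdivrMr // mul1r; lra.
by case: (leP x 0) => ?; case: (leP 1 x) => ?; lra.
Qed.

Lemma ramp_end : ramp a h (a + h) = 1.
Proof.
rewrite ramp_affine ?lexx ?lerDl ?ltW //.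
by rewrite (addrC a h) addrK divff ?gt_eqF.
Qed.

End RampLemmas.

End RampPerturbation.

Section Solutions.
Variables (R : realType) (n : nat).
Notation V := 'rV[R]_n.

Lemma ramp_solution (G G' : V -> set V) I (phi : R -> V) (v : V) (s h : R) :
  is_solution G I phi -> I s -> 0 < h -> h <= s ->
  (forall t d, I t -> t < s - h -> G (phi t) d -> G' (phi t) d) ->
  (forall t d, I t -> s - h < t -> t < s -> G (phi t) d ->
     G' (phi t + ramp (s - h) h t *: v) (d + h^-1 *: v)) ->
  is_solution G' [set t | I t /\ t <= s] (fun t => phi t + ramp (s - h) h t *: v).
Proof.
move=> [Iint I0 acI [N [negN Nd]]] Is h0 hs Gbefore Gramp.
split.
- move=> a b [Ia as_] [Ib bs] x /andP[ax xb]; split; last lra.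
  by apply: (Iint a b Ia Ib); rewrite ax xb.
- by split => //; lra.
- move=> a b ab sub.
  apply: (@abs_cont_add_lipschitz_scale _ _ _ _ _ _ _ h^-1); first by rewrite invr_ge0 ltW.
    by apply: acI => // x /sub [].
  exact: ramp_lipschitz.
exists (N `|` [set s - h] `|` [set s]); split.
  by do 2?apply: negligibleU => //; exact: negligible_set1.
move=> t [It ts] nN.
have [dphi Gphi] : derivable phi t 1 /\ G (phi t) ('D_1 phi t).
  by apply: Nd => // Nt; apply: nN; left; left.
have [tlt|tgt] := ltP t (s - h).
  have near0 : \forall t' \near t, ramp (s - h) h t' = 0 * t' + 0.
    by near=> t'; rewrite mul0r addr0 ramp_eq0 // ltW //; near: t'; exact: lt_nbhsl.
  have [dpsi ->] := derivable_add_affine_scale v dphi near0.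
  by rewrite scale0r addr0 ramp_eq0 ?scale0r ?addr0 ?ltW //; split => //; apply: Gbefore.
have tsh : s - h < t by rewrite lt_neqAle tgt andbT; apply/eqP => e1; apply: nN; left; right.
have tlts : t < s by rewrite lt_neqAle ts andbT; apply/eqP => e1; apply: nN; right.
have near_affine : \forall t' \near t, ramp (s - h) h t' = h^-1 * t' + - (s - h) / h.
  near=> t'; rewrite ramp_affine // ?[in X in _ <= X]subrK; last 2 first.
  - by apply: ltW; near: t'; exact: lt_nbhsr.
  - by apply: ltW; near: t'; exact: lt_nbhsl.
  by rewrite mulrBl mulrC mulNr.
have [dpsi ->] := derivable_add_affine_scale v dphi near_affine.
by split => //; apply: Gramp.
Unshelve. all: by end_near.
Qed.

Lemma bend_solution (G G' : V -> set V) I (phi : R -> V) y u (rho g s h : R) :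
  is_solution G I phi -> I s -> 0 < h -> h <= s ->
  (forall x d, G x d -> G' x d) ->
  (forall x x' d w, `|y - x| < rho -> `|y - x'| < rho -> G x d -> `|w| < g ->
     G' x' (d + w)) ->
  (forall t, s - h < t -> t <= s -> `|y - phi t| < rho / 2) ->
  `|u - phi s| < rho / 2 -> `|u - phi s| < g * h ->
  is_solution G' [set t | I t /\ t <= s]
    (fun t => phi t + ramp (s - h) h t *: (u - phi s)).
Proof.
move=> sol Is h0 hs GG' robust near_end vr vg.
apply: (ramp_solution sol Is h0 hs) => [t d _ _|t d _ tsh ts Gd]; first exact: GG'.
have yt := near_end t tsh (ltW ts).
have v0 := normr_ge0 (u - phi s).
apply: (robust _ _ _ _ _ _ Gd); first lra.
  rewrite opprD addrA; apply: le_lt_trans (ler_normB _ _) _.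
  rewrite normrZ ger0_norm ?ramp_ge0 //.
  by have := ler_piMl (normr_ge0 (u - phi s)) (ramp_le1 (s - h) h t); lra.
by rewrite normrZ gtr0_norm ?invr_gt0 // mulrC ltr_pdivrMr.
Qed.

Lemma solution_slow_approach (G : V -> set V) I (phi : R -> V) y (rho M s : R) :
  is_solution G I phi -> I s -> 0 <= s -> 0 < M ->
  (forall x d, `|y - x| < rho -> G x d -> `|d| <= M) ->
  rho <= `|y - phi 0| -> `|y - phi s| < rho / 4 ->
  exists t0, [/\ 0 <= t0, t0 + rho / (4 * M) < s &
    forall t, t0 < t -> t <= s -> `|y - phi t| < rho / 2].
Proof.
move=> [Iint I0 acI [N [negN Nd]]] Is s0 M0 Gbound far near_s.
have rho0 : 0 < rho by have := normr_ge0 (y - phi s); lra.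
have Ibet t : 0 <= t -> t <= s -> I t.
  by move=> t0 ts; apply: (Iint 0 s I0 Is); rewrite t0 ts.
have acs a b : 0 <= a -> a <= b -> b <= s -> abs_cont_on phi a b.
  move=> a0 ab bs; apply: acI => // x; rewrite /= in_itv /= => /andP[ax xb].
  by apply: Ibet; lra.
have far2 : rho / 2 <= `|y - phi 0| by lra.
have [t0 [/andP[t00 t0s] t0far after]] := abs_cont_last_exit s0 (acs 0 s (lexx 0) s0 (lexx s)) far2.
exists t0; split => //.
have lip : `|phi s - phi t0| <= M * (s - t0).
  apply: (abs_cont_lipschitz t0s (ltW M0) (negligibleU negN (negligible_set1 t0))).
    exact: acs.
  move=> t t0t ts nN.
  have t0t' : t0 < t.
    by rewrite lt_neqAle t0t andbT; apply/eqP => e1; apply: nN; right; rewrite e1.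
  have [dphi Gphi] := Nd t (Ibet t (le_trans t00 t0t) ts) (fun Nt => nN (or_introl Nt)).
  by split => //; apply: Gbound Gphi; have := after t t0t' ts; lra.
have key : rho / 4 < M * (s - t0).
  by have := ler_distD (phi s) y (phi t0); lra.
rewrite -ltrBrDl ltr_pdivrMr ?mulr_gt0 //.
have -> : (s - t0) * (4 * M) = 4 * (M * (s - t0)) by ring.
lra.
Qed.

End Solutions.

Lemma closure_unsafe_Kset_sub (R : realType) (n : nat)
    (F : 'rV[R]_n -> set 'rV[R]_n) (Xo Xu : set 'rV[R]_n) (eps_o eps : 'rV[R]_n -> R) :
  sv_continuous F -> (forall x, compact (F x)) -> safe (inflate F eps_o) Xo Xu ->
  continuous eps_o -> pos_cont eps -> (forall x, eps x < eps_o x) ->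
  closure Xu `&` closure (Kset F eps Xo) `<=` closure Xo.
Proof.
move=> Fc cF safe_o ceo [ce epos] eps_lt y [cXu cK]; apply: contrapT => nXo.
have [usc lsc] := Fc y.
have [rho [M [g [rho0 M0 g0 bounded robust]]]] :=
  inflate_locally_robust usc lsc (cF y) (ce y) (ceo y) epos (eps_lt y).
have [r0 r00 noXo] := not_closure_normP nXo.
pose rh := Num.min rho r0.
have rh0 : 0 < rh by rewrite lt_min rho0 r00.
have rh_rho : rh <= rho by rewrite ge_min lexx.
have rh_r0 : rh <= r0 by rewrite ge_min lexx orbT.
pose h := rh / (4 * M).
have h0 : 0 < h by rewrite divr_gt0 // mulr_gt0.
pose r := Num.min (rh / 8) (g * h / 2).
have r0' : 0 < r by rewrite lt_min; apply/andP; split; rewrite divr_gt0 // mulr_gt0.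
have r_rh : r <= rh / 8 by rewrite ge_min lexx.
have r_gh : r <= g * h / 2 by rewrite ge_min lexx orbT.
have /closure_normP/(_ r r0') [z Kz yz] := cK.
have /closure_normP/(_ r r0') [u Xuu yu] := cXu.
move: Kz => [_ _ [x0 Xx0 [I [phi [s [[sol _] phi0 Is /andP[s0 _] zs]]]]]]; subst z.
have far : rh <= `|y - phi 0|.
  by rewrite leNgt; apply/negP => yx; apply: (noXo (phi 0)); [lra | rewrite phi0].
have yz4 : `|y - phi s| < rh / 4 by lra.
have [t0 [t00 t0h near_end]] :=
  solution_slow_approach sol Is s0 M0 (fun x d yx => bounded x d (lt_le_trans yx rh_rho))
    far yz4.
have {}t0h : t0 + h < s := t0h.
have hs : h <= s by lra.
have near_end' t : s - h < t -> t <= s -> `|y - phi t| < rh / 2.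
  by move=> tsh ts; apply: near_end ts; lra.
have us : `|u - phi s| < 2 * r by have := ler_distD y u (phi s); rewrite (distrC u y); lra.
have us_rh : `|u - phi s| < rh / 2 by lra.
have us_gh : `|u - phi s| < g * h by lra.
have sol_o := bend_solution (G' := inflate F eps_o) sol Is h0 hs
  (fun x d => inflate_le (epos x) (ltW (eps_lt x)))
  (fun x x' d w yx yx' => robust x x' d w (lt_le_trans yx rh_rho) (lt_le_trans yx' rh_rho))
  near_end' us_rh us_gh.
apply: (safe_o _ _ sol_o _ s (conj Is (lexx s)) s0).
  by rewrite ramp_eq0 ?scale0r ?addr0 ?phi0 //; lra.
by rewrite -{3}(subrK h s) ramp_end // scale1r addrC subrK.
Qed.

Unset Implicit Arguments.

Theorem lemma9 (R : realType) (n : nat) (F : 'rV[R]_n -> set 'rV[R]_n)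
  (Xo Xu : set 'rV[R]_n) (eps_o : 'rV[R]_n -> R) :
  sv_continuous F ->
  (forall x, F x !=set0 /\ compact (F x) /\ convex_set (F x)) ->
  forward_complete F ->
  margin F Xo Xu eps_o ->
  forall eps : 'rV[R]_n -> R, pos_cont eps -> (forall x, eps x < eps_o x) ->
    (closure Xo `&` closure Xu = set0 ->
       closure Xu `&` closure (Kset F eps Xo) = set0) /\
    (closure Xo `&` Xu = set0 ->
       Xu `&` closure (Kset F eps Xo) = set0).
Proof.
move=> Fc Fp _ [[ceo _] safe_o] eps peps eps_lt.
have sub := closure_unsafe_Kset_sub Fc (fun x => proj1 (proj2 (Fp x))) safe_o ceo peps eps_lt.
split => disj; apply/seteqP; split => // y [Xuy Ky].
- have : (closure Xo `&` closure Xu) y by split => //; exact: sub.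
  by rewrite disj.
- have : (closure Xo `&` Xu) y by split => //; apply: sub; split => //; exact: subset_closure.
  by rewrite disj.
Qed.
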